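(* Let $R>0$ and $p>0$. Let $\mathcal G$ be a hypergraph, $U$ a set, $\pi:V(\mathcal G)\to U$ a function with $|\pi(E)|=|E|$ for every $E\in\mathcal G$, and $\vartheta:\pi(\mathcal G)\to\mathbb R_{\ge0}$. If $\Lambda_p(\vartheta)<e(\vartheta)^2/R$, then $\Lambda_p(\vartheta\mathbin{\hat\circ}\pi)<e(\vartheta\mathbin{\hat\circ}\pi)^2/R$.
   Context: A hypergraph is identified with its edge set; $\pi(\mathcal G)=\{\pi(E):E\in\mathcal G\}$ with vertex set $\pi(V(\mathcal G))$. For $\nu:\mathcal G\to\mathbb R_{\ge0}$: $e(\nu)=\sum_E\nu(E)$, $d_\nu(L)=\sum_{E\in\mathcal G,L\subset E}\nu(E)$, $\Lambda_p(\nu)=\sum_{L\subset V(\mathcal G),|L|\ge2}d_\nu(L)^2p^{-|L|}$. The pullback $\vartheta\mathbin{\hat\circ}\pi:\mathcal G\to\mathbb R_{\ge0}$ is $\vartheta\mathbin{\hat\circ}\pi(E)=\vartheta(\pi(E))/|\{E_0\in\mathcal G:\pi(E_0)=\pi(E)\}|$. *)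

From mathcomp Require Import all_boot all_order all_algebra.
Set Implicit Arguments. Unset Strict Implicit. Unset Printing Implicit Defensive.
Import Order.TTheory GRing.Theory Num.Theory.
Local Open Scope ring_scope.

(* A finite hypergraph on a finite vertex type T is given by its vertex set
   VH : {set T} and its edge set H : {set {set T}} (edges are subsets of VH).
   A weight nu : H -> R>=0 is represented by a function {set T} -> R whose
   values outside H are irrelevant. *)
Section Hyper.
Variables (R : realFieldType) (T : finType).

Definition hg_e (H : {set {set T}}) (nu : {set T} -> R) : R :=
  \sum_(E in H) nu E.

Definition hg_deg (H : {set {set T}}) (nu : {set T} -> R) (L : {set T}) : R :=
  \sum_(E in H | L \subset E) nu E.

Definition hg_Lambda (VH : {set T}) (H : {set {set T}}) (p : R)
    (nu : {set T} -> R) : R :=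
  \sum_(L in powerset VH | (1 < #|L|)%N) (hg_deg H nu L) ^+ 2 * p ^- #|L|.
End Hyper.

Definition hg_image (T U : finType) (pi : T -> U) (G : {set {set T}})
  : {set {set U}} := [set pi @: E | E : {set T} in G].

Definition hg_pullback (R : realFieldType) (T U : finType) (pi : T -> U)
    (G : {set {set T}}) (theta : {set U} -> R) (E : {set T}) : R :=
  theta (pi @: E) / (#|[set E0 in G | pi @: E0 == pi @: E]|)%:R.

From mathcomp Require Import all_boot all_order all_algebra.
Import Order.TTheory GRing.Theory Num.Theory.
Local Open Scope ring_scope.

(* Summing the pullback over a fibre of [E |-> pi @: E] gives back theta, so
   e is preserved.  As pi is injective on every edge E, at most one L inside E
   has a given image L', and then L' lies inside pi @: E; hence the degrees
   d(L) over the fibre of L' add up to at most d_theta(L'), and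
   |pi @: L| = |L| whenever d(L) <> 0.  Grouping the terms of Lambda_p by
   pi @: L and bounding a sum of squares by the square of the sum gives
   Lambda_p(pullback) <= Lambda_p(theta), so the strict inequality transfers. *)

Lemma sum_sqr_le_sqr_sum {R : numDomainType} {I : finType} (P : pred I)
    (a : I -> R) :
  (forall i, P i -> 0 <= a i) ->
  \sum_(i | P i) a i ^+ 2 <= (\sum_(i | P i) a i) ^+ 2.
Proof.
move=> a_ge0; rewrite [leRHS]expr2 big_distrl /=.
apply: ler_sum => i Pi; rewrite expr2 ler_wpM2l ?a_ge0 //.
by rewrite (bigD1 i) //= lerDl sumr_ge0 // => j /andP[/a_ge0].
Qed.

Lemma imset_in_inj {aT rT : finType} {f : aT -> rT} {D A B : {set aT}} :
  {in D &, injective f} -> A \subset D -> B \subset D ->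
  f @: A = f @: B -> A = B.
Proof.
move=> injf.
have sub (X Y : {set aT}) : X \subset D -> Y \subset D -> f @: X = f @: Y -> X \subset Y.
  move=> XD YD eXY; apply/subsetP => x Xx.
  have /imsetP[y Yy fxy] : f x \in f @: Y by rewrite -eXY imset_f.
  by rewrite (injf x y) ?(subsetP XD x) ?(subsetP YD y).
by move=> AD BD eAB; apply/eqP; rewrite eqEsubset (sub A B) // (sub B A).
Qed.

Lemma hg_deg_ge0 {R : realFieldType} {T : finType} {H : {set {set T}}}
    {nu : {set T} -> R} :
  (forall E, E \in H -> 0 <= nu E) -> forall L, 0 <= hg_deg H nu L.
Proof. by move=> nu_ge0 L; apply: sumr_ge0 => E /andP[/nu_ge0]. Qed.

Section Pullback.
Variables (R : realFieldType) (T U : finType) (pi : T -> U).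
Variables (G : {set {set T}}) (theta : {set U} -> R).

Local Notation nu := (hg_pullback pi G theta).

Lemma sum_pullback (Q : pred {set U}) :
  \sum_(E in G | Q (pi @: E)) nu E = \sum_(F in hg_image pi G | Q F) theta F.
Proof.
rewrite (partition_big (P := fun E => (E \in G) && Q (pi @: E)) (fun E => pi @: E)
  (fun F => (F \in hg_image pi G) && Q F)) => [|E /andP[EG QE]] /=; last first.
  by rewrite QE andbT imset_f.
apply: eq_bigr => F /andP[/imsetP[E0 E0G ->{F}] QE0].
set fibre := [set E in G | pi @: E == pi @: E0].
rewrite (eq_bigl [in fibre]) => [|E]; last first.
  by rewrite inE; case: eqP => [->|_]; rewrite ?QE0 ?andbT ?andbF.
rewrite (eq_bigr (fun=> theta (pi @: E0) / #|fibre|%:R)) => [|E]; last first.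
  by rewrite inE => /andP[_ /eqP eE]; rewrite /hg_pullback eE.
have fibre_gt0 : (0 < #|fibre|)%N by apply/card_gt0P; exists E0; rewrite inE E0G eqxx.
by rewrite sumr_const -(mulr_natr (theta _ / _)) divfK // pnatr_eq0 -lt0n.
Qed.

Lemma hg_e_pullback : hg_e G nu = hg_e (hg_image pi G) theta.
Proof.
transitivity (\sum_(E in G | xpredT (pi @: E)) nu E).
  by apply: eq_bigl => E; rewrite andbT.
by rewrite (sum_pullback xpredT); apply: eq_bigl => F; rewrite andbT.
Qed.

Hypothesis card_imset_edge : forall E, E \in G -> #|pi @: E| = #|E|.
Hypothesis theta_ge0 : forall F, F \in hg_image pi G -> 0 <= theta F.

Lemma pi_inj_edge E : E \in G -> {in E &, injective pi}.
Proof. by move=> EG; apply/imset_injP; rewrite card_imset_edge. Qed.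

Lemma pullback_ge0 E : E \in G -> 0 <= nu E.
Proof. by move=> EG; rewrite divr_ge0 ?theta_ge0 ?imset_f. Qed.

Lemma card_imset_of_hg_deg_neq0 L : hg_deg G nu L != 0 -> #|pi @: L| = #|L|.
Proof.
apply: contraNeq => neq_card; apply/eqP/big_pred0 => E.
apply/andP => -[EG LE]; move/eqP: neq_card; apply.
by apply: card_in_imset => x y /(subsetP LE) xE /(subsetP LE); apply: pi_inj_edge.
Qed.

Lemma sum_hg_deg_fibre_le (P : pred {set T}) (L' : {set U}) :
  \sum_(L | P L && (pi @: L == L')) hg_deg G nu L
    <= hg_deg (hg_image pi G) theta L'.
Proof.
rewrite /hg_deg (exchange_big_dep [in G]) /= => [|L E _ /andP[]//].
rewrite -(sum_pullback (fun F => L' \subset F)) big_mkcondr /=.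
apply: ler_sum => E EG.
set fibre_in_E := [pred L | (P L && (pi @: L == L')) && ((E \in G) && (L \subset E))].
case: (pickP fibre_in_E) => [L0 L0_in | no_L]; last first.
  by rewrite big_pred0 //; case: ifP => // _; apply: pullback_ge0.
have /andP[/andP[_ /eqP piL0] /andP[_ L0E]] := L0_in.
have unique_L0 : fibre_in_E =1 pred1 L0.
  move=> L; apply/idP/eqP => [|-> //].
  case/andP=> /andP[_ /eqP piL] /andP[_ LE].
  by apply: imset_in_inj (pi_inj_edge E EG) LE L0E _; rewrite piL piL0.
by rewrite (big_pred1 L0 unique_L0) -piL0 imsetS.
Qed.

Lemma hg_Lambda_pullback_reindex (VG : {set T}) (p : R) :
  hg_Lambda VG G p nu =
  \sum_(L in powerset VG | (1 < #|pi @: L|)%N) hg_deg G nu L ^+ 2 * p ^- #|pi @: L|.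
Proof.
rewrite /hg_Lambda big_mkcondr [RHS]big_mkcondr /=; apply: eq_bigr => L _.
have [->|/card_imset_of_hg_deg_neq0 -> //] := eqVneq (hg_deg G nu L) 0.
by rewrite expr0n /= !mul0r !if_same.
Qed.

Lemma hg_Lambda_pullback_le (VG : {set T}) (p : R) : 0 <= p ->
  hg_Lambda VG G p nu <= hg_Lambda (pi @: VG) (hg_image pi G) p theta.
Proof.
move=> p_ge0; rewrite hg_Lambda_pullback_reindex.
rewrite (partition_big (P := fun L => (L \in powerset VG) && (1 < #|pi @: L|)%N)
  (fun L => pi @: L)
  (fun L' => (L' \in powerset (pi @: VG)) && (1 < #|L'|)%N)) /=; last first.
  by move=> L /andP[]; rewrite !powersetE => /(imsetS pi) ->.
apply: ler_sum => L' /andP[_ L'_gt1].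
rewrite (eq_bigr (fun L => hg_deg G nu L ^+ 2 * p ^- #|L'|)) => [|L]; last first.
  by case/andP=> _ /eqP ->.
rewrite -mulr_suml ler_wpM2r ?invr_ge0 ?exprn_ge0 //.
set fibre := fun L => (L \in powerset VG) && (pi @: L == L').
rewrite (eq_bigl fibre) => [|L]; last first.
  by rewrite /fibre; case: eqP => [->|_]; rewrite ?andbF ?L'_gt1 ?andbT.
apply: le_trans (sum_sqr_le_sqr_sum fibre _ (fun L _ => hg_deg_ge0 pullback_ge0 L)) _.
rewrite lerXn2r ?nnegrE ?sum_hg_deg_fibre_le ?(hg_deg_ge0 theta_ge0) //.
by apply: sumr_ge0 => L _; apply: (hg_deg_ge0 pullback_ge0).
Qed.

End Pullback.

Theorem lemma7p4 (R : realFieldType) (Rc p : R) (T U : finType)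
    (VG : {set T}) (G : {set {set T}}) (pi : T -> U) (theta : {set U} -> R) :
  0 < Rc -> 0 < p ->
  (forall E, E \in G -> E \subset VG) ->
  (forall E, E \in G -> #|pi @: E| = #|E|) ->
  (forall F, F \in hg_image pi G -> 0 <= theta F) ->
  hg_Lambda (pi @: VG) (hg_image pi G) p theta
    < (hg_e (hg_image pi G) theta) ^+ 2 / Rc ->
  hg_Lambda VG G p (hg_pullback pi G theta)
    < (hg_e G (hg_pullback pi G theta)) ^+ 2 / Rc.
Proof.
move=> _ p_gt0 _ card_imset_edge theta_ge0 Lambda_theta_lt.
rewrite hg_e_pullback; apply: le_lt_trans Lambda_theta_lt.
exact: hg_Lambda_pullback_le (ltW p_gt0).
Qed.
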